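(* Let $y_0\in\mathbb{R}$, $b>0$, $\epsilon>0$, and let $f:[y_0,\infty)\to\mathbb{R}$ be such that $p:=1/f$ is well defined and twice differentiable on $[y_0,\infty)$, with $f(y_0)>0$, $f'(y)>0$ and $p''(y)>0$ for all $y\ge y_0$. Assume $b<\int_{y_0}^{\infty}p(y)\,dy$ (possibly $+\infty$). For $h>0$ and integers $N\ge0$ define $$\Sigma_{l,h,N}=\sum_{i=1}^{N}h\,p(y_0+hi),\qquad \Sigma_{t,h,N}=\sum_{i=1}^{N}\frac h2\big(p(y_0+hi)+p(y_0+h(i-1))\big).$$ For each positive integer $j$ let $h^{(j)}=\epsilon/j$, let $n_2^{(j)}$ be the smallest positive integer $N$ with $\Sigma_{l,h^{(j)},N}\ge b$ (assume $n_2^{(1)}$ exists), and let $n_3^{(j)}$ be the largest integer $N\ge0$ with $\Sigma_{t,h^{(j)},N}\le b$. Then for every positive integer $j$, $$n_2^{(j)}>n_3^{(j)}\qquad\text{and}\qquad h^{(j)}\,n_3^{(j)}\ge h^{(1)}\,n_3^{(1)}.$$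
   Context: $\Sigma_{l,h,N}$ and $\Sigma_{t,h,N}$ are the lower rectangular and trapezoidal sums with step $h$ for $\int_{y_0}^{y_0+hN}p(y)\,dy$; empty sums are $0$. *)

From Stdlib Require Import Reals.
From Coquelicot Require Import Coquelicot.
Open Scope R_scope.

Definition has_deriv_ge (y0 : R) (g : R -> R) (y l : R) : Prop :=
  filterlim (fun x => (g x - g y) / (x - y))
    (within (fun x => y0 <= x /\ x <> y) (locally y)) (locally l).

Fixpoint sigma_l (p : R -> R) (y0 h : R) (N : nat) : R :=
  match N with
  | O => 0
  | S n => sigma_l p y0 h n + h * p (y0 + h * INR (S n))
  end.

Fixpoint sigma_t (p : R -> R) (y0 h : R) (N : nat) : R :=
  match N with
  | O => 0
  | S n => sigma_t p y0 h n
           + h / 2 * (p (y0 + h * INR (S n)) + p (y0 + h * INR n))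
  end.

Definition is_first_l (p : R -> R) (y0 h b : R) (N : nat) : Prop :=
  (0 < N)%nat /\ b <= sigma_l p y0 h N /\
  forall M : nat, (0 < M)%nat -> b <= sigma_l p y0 h M -> (N <= M)%nat.

Definition is_last_t (p : R -> R) (y0 h b : R) (N : nat) : Prop :=
  sigma_t p y0 h N <= b /\
  forall M : nat, sigma_t p y0 h M <= b -> (M <= N)%nat.

(* The trapezoidal and lower sums are compared cell by cell. Since p = 1/f is
   positive and decreasing, every trapezoid exceeds its lower rectangle, so
   Sigma_t already passes b strictly before Sigma_l reaches it: n3 < n2.
   Since p' is increasing, p is convex and lies below each of its chords; the
   fine trapezoids inside a coarse cell of width eps are therefore dominated
   by the trapezoids of the chord, whose sum is exactly the coarse trapezoid.
   Hence Sigma_t with step eps/j over j m nodes is at most Sigma_t with step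
   eps over m nodes, which gives j n3^(1) <= n3^(j). Derivatives are only
   given on [y0, +oo); the mean value theorem is obtained by extending the
   functions constantly to the left of y0. *)

From Stdlib Require Import Reals Lra Lia Classical Arith Wf_nat.
From Coquelicot Require Import Coquelicot.
Open Scope R_scope.

Definition increasing_from (y0 : R) (g : R -> R) : Prop :=
  forall a c, y0 <= a -> a < c -> g a < g c.

Definition decreasing_from (y0 : R) (g : R -> R) : Prop :=
  forall a c, y0 <= a -> a < c -> g c < g a.

Definition convex_from (y0 : R) (g : R -> R) : Prop :=
  forall x y z, y0 <= x -> x <= y -> y <= z -> x < z ->
  (g y - g x) * (z - x) <= (g z - g x) * (y - x).

Definition extend_left (y0 : R) (g : R -> R) (x : R) : R := g (Rmax y0 x).

Lemma has_deriv_ge_approx y0 g y l : has_deriv_ge y0 g y l ->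
  forall e, 0 < e -> exists d, 0 < d /\
  forall x, y0 <= x -> x <> y -> Rabs (x - y) < d ->
  Rabs ((g x - g y) / (x - y) - l) < e.
Proof.
  intros H e He.
  destruct (proj1 (filterlim_locally _ _) H (mkposreal e He)) as [d Hd].
  exists d; split; [apply cond_pos|].
  intros x Hx Hxy Hxd; apply (Hd x); [exact Hxd | split; assumption].
Qed.

Lemma extend_left_derivable y0 g y l : y0 < y -> has_deriv_ge y0 g y l ->
  derivable_pt_lim (extend_left y0 g) y l.
Proof.
  intros Hy H e He.
  destruct (has_deriv_ge_approx _ _ _ _ H e He) as [d [Hd Happrox]].
  assert (Hm : 0 < Rmin d (y - y0)) by (apply Rmin_pos; lra).
  exists (mkposreal _ Hm); intros k Hk Hkd; simpl in Hkd.
  pose proof (Rmin_l d (y - y0)); pose proof (Rmin_r d (y - y0)).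
  pose proof (Rabs_def2 _ _ Hkd).
  unfold extend_left; rewrite (Rmax_right y0 (y + k)), (Rmax_right y0 y) by lra.
  specialize (Happrox (y + k)); replace (y + k - y) with k in Happrox by ring.
  apply Happrox; lra.
Qed.

(* The difference quotients at y0 are bounded by |l| + 1 near y0, so g is
   Lipschitz there. *)
Lemma extend_left_continuous_at y0 g l : has_deriv_ge y0 g y0 l ->
  continuity_pt (extend_left y0 g) y0.
Proof.
  intros H e He.
  destruct (has_deriv_ge_approx _ _ _ _ H 1 Rlt_0_1) as [d [Hd Happrox]].
  set (L := Rabs l + 1).
  assert (HL : 0 < L) by (unfold L; pose proof (Rabs_pos l); lra).
  exists (Rmin d (e / L)); split.
  { apply Rmin_pos; [lra | apply Rdiv_lt_0_compat; lra]. }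
  intros x [[_ Hx] Hxd]; simpl in *; unfold R_dist in *.
  pose proof (Rmin_l d (e / L)); pose proof (Rmin_r d (e / L)).
  unfold extend_left; rewrite (Rmax_left y0 y0) by lra.
  destruct (Rle_lt_dec x y0) as [Hle | Hlt].
  - rewrite Rmax_left, Rminus_diag, Rabs_R0 by lra; exact He.
  - rewrite Rmax_right by lra.
    rewrite Rabs_right in Hxd by lra.
    specialize (Happrox x ltac:(lra) ltac:(lra) ltac:(rewrite Rabs_right; lra)).
    set (q := (g x - g y0) / (x - y0)) in *.
    assert (Hq : Rabs q < L) by (unfold L; pose proof (Rabs_triang_inv q l); lra).
    replace (g x - g y0) with (q * (x - y0)) by (unfold q; field; lra).
    rewrite Rabs_mult, (Rabs_right (x - y0)) by lra.
    apply Rle_lt_trans with (L * (x - y0)).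
    + apply Rmult_le_compat_r; lra.
    + replace e with (L * (e / L)) by (field; lra).
      apply Rmult_lt_compat_l; lra.
Qed.

Lemma has_deriv_ge_MVT y0 g g1 :
  (forall y, y0 <= y -> has_deriv_ge y0 g y (g1 y)) ->
  forall a b, y0 <= a -> a < b ->
  exists c, a <= c <= b /\ g b - g a = g1 c * (b - a).
Proof.
  intros H a b Ha Hab.
  destruct (MVT_gen (extend_left y0 g) a b g1) as [c [Hc E]].
  - intros x Hx; rewrite Rmin_left, Rmax_right in Hx by lra.
    apply is_derive_Reals, extend_left_derivable; [lra | apply H; lra].
  - intros x Hx; rewrite Rmin_left, Rmax_right in Hx by lra.
    destruct (Req_dec x y0) as [-> | Hne].
    + apply (extend_left_continuous_at _ _ (g1 y0)), H; lra.
    + apply derivable_continuous_pt; exists (g1 x).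
      apply extend_left_derivable; [lra | apply H; lra].
  - rewrite Rmin_left, Rmax_right in Hc by lra.
    unfold extend_left in E; rewrite !Rmax_right in E by lra.
    exists c; split; assumption.
Qed.

Lemma has_deriv_ge_pos_increasing y0 g g1 :
  (forall y, y0 <= y -> has_deriv_ge y0 g y (g1 y)) ->
  (forall y, y0 <= y -> 0 < g1 y) -> increasing_from y0 g.
Proof.
  intros Hg Hg1 a c Ha Hac.
  destruct (has_deriv_ge_MVT y0 g g1 Hg a c Ha Hac) as [d [Hd E]].
  assert (0 < g1 d) by (apply Hg1; lra).
  nra.
Qed.

Lemma has_deriv_ge_increasing_convex y0 g g1 :
  (forall y, y0 <= y -> has_deriv_ge y0 g y (g1 y)) ->
  increasing_from y0 g1 -> convex_from y0 g.
Proof.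
  intros Hg Hg1 x y z Hx Hxy Hyz Hxz.
  destruct (Req_dec x y) as [<- | Hne1]; [lra |].
  destruct (Req_dec y z) as [-> | Hne2]; [lra |].
  destruct (has_deriv_ge_MVT y0 g g1 Hg x y Hx ltac:(lra)) as [c1 [Hc1 E1]].
  destruct (has_deriv_ge_MVT y0 g g1 Hg y z ltac:(lra) ltac:(lra))
    as [c2 [Hc2 E2]].
  assert (Hslope : g1 c1 <= g1 c2).
  { destruct (Req_dec c1 c2) as [-> | Hne]; [lra |].
    left; apply Hg1; lra. }
  replace (g z - g x) with (g1 c1 * (y - x) + g1 c2 * (z - y)) by lra.
  rewrite E1.
  assert (0 <= (y - x) * (z - y) * (g1 c2 - g1 c1))
    by (apply Rmult_le_pos; [apply Rmult_le_pos |]; lra).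
  nra.
Qed.

Lemma inv_increasing_decreasing y0 f p :
  (forall y, y0 <= y -> p y = 1 / f y) -> increasing_from y0 f -> 0 < f y0 ->
  (forall y, y0 <= y -> 0 < p y) /\ decreasing_from y0 p.
Proof.
  intros Hp Hf Hf0.
  assert (Hfpos : forall y, y0 <= y -> 0 < f y).
  { intros y Hy; destruct (Req_dec y y0) as [-> | Hne]; [exact Hf0 |].
    pose proof (Hf y0 y (Rle_refl y0) ltac:(lra)); lra. }
  split.
  - intros y Hy; rewrite Hp by exact Hy.
    apply Rdiv_lt_0_compat; [lra | auto].
  - intros a c Ha Hac; rewrite !Hp by lra.
    pose proof (Hf a c Ha Hac); pose proof (Hfpos a Ha).
    unfold Rdiv; rewrite !Rmult_1_l; apply Rinv_lt_contravar; nra.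
Qed.

Lemma nat_has_least (P : nat -> Prop) :
  (exists n, P n) -> exists m, P m /\ forall k, P k -> (m <= k)%nat.
Proof.
  intros Hex.
  destruct (dec_inh_nat_subset_has_unique_least_element P
    (fun n => classic (P n)) Hex) as [m [Hm _]].
  exists m; exact Hm.
Qed.

Lemma nat_bounded_has_greatest (P : nat -> Prop) B :
  P 0%nat -> (forall k, P k -> (k < B)%nat) ->
  exists m, P m /\ forall k, P k -> (k <= m)%nat.
Proof.
  revert P; induction B as [| B IH]; intros P H0 HB.
  - specialize (HB _ H0); lia.
  - destruct (classic (P B)) as [PB | nPB].
    + exists B; split; [exact PB |].
      intros k Pk; specialize (HB _ Pk); lia.
    + apply IH; [exact H0 |].
      intros k Pk; specialize (HB _ Pk).
      destruct (Nat.eq_dec k B) as [-> |]; [contradiction | lia].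
Qed.

Section RiemannSums.

Variables (p : R -> R) (y0 : R).
Hypothesis p_pos : forall y, y0 <= y -> 0 < p y.
Hypothesis p_decr : decreasing_from y0 p.

Lemma grid_point_ge h n : 0 < h -> y0 <= y0 + h * INR n.
Proof. intros; pose proof (pos_INR n); nra. Qed.

Lemma p_grid_decr h n : 0 < h ->
  p (y0 + h * INR (S n)) < p (y0 + h * INR n).
Proof. intros Hh; apply p_decr; [apply grid_point_ge; lra | rewrite S_INR; nra]. Qed.

Lemma sigma_l_le_sigma_t h N : 0 < h -> sigma_l p y0 h N <= sigma_t p y0 h N.
Proof.
  intros Hh; induction N as [| N IH]; cbn [sigma_l sigma_t]; [lra |].
  pose proof (p_grid_decr h N Hh).
  assert (0 < h / 2 * (p (y0 + h * INR N) - p (y0 + h * INR (S N))))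
    by (apply Rmult_lt_0_compat; lra).
  lra.
Qed.

Lemma sigma_l_lt_sigma_t h N : 0 < h ->
  sigma_l p y0 h (S N) < sigma_t p y0 h (S N).
Proof.
  intros Hh; cbn [sigma_l sigma_t].
  pose proof (sigma_l_le_sigma_t h N Hh); pose proof (p_grid_decr h N Hh).
  assert (0 < h / 2 * (p (y0 + h * INR N) - p (y0 + h * INR (S N))))
    by (apply Rmult_lt_0_compat; lra).
  lra.
Qed.

Lemma sigma_t_monotone h M N : 0 < h -> (M <= N)%nat ->
  sigma_t p y0 h M <= sigma_t p y0 h N.
Proof.
  intros Hh HMN; induction HMN as [| N _ IH]; cbn [sigma_t]; [lra |].
  pose proof (p_pos _ (grid_point_ge h (S N) Hh)).
  pose proof (p_pos _ (grid_point_ge h N Hh)).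
  nra.
Qed.

Lemma sigma_t_le_before_sigma_l h b n M : 0 < h -> (0 < n)%nat ->
  b <= sigma_l p y0 h n -> sigma_t p y0 h M <= b -> (M < n)%nat.
Proof.
  intros Hh Hn Hbn HbM; destruct (le_lt_dec n M) as [Hle |]; [| assumption].
  destruct n as [| n]; [lia |].
  pose proof (sigma_l_lt_sigma_t h n Hh); pose proof (sigma_t_monotone h _ _ Hh Hle).
  lra.
Qed.

Lemma sigma_l_block_ge h n k : 0 < h ->
  INR k * h * p (y0 + h * INR (n + k)) <= sigma_l p y0 h (n + k) - sigma_l p y0 h n.
Proof.
  intros Hh; induction k as [| k IH].
  - rewrite Nat.add_0_r; simpl; lra.
  - rewrite Nat.add_succ_r; cbn [sigma_l].
    pose proof (p_grid_decr h (n + k) Hh).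
    assert (INR k * h * p (y0 + h * INR (S (n + k)))
            <= INR k * h * p (y0 + h * INR (n + k))).
    { pose proof (pos_INR k); apply Rmult_le_compat_l; nra. }
    rewrite S_INR; lra.
Qed.

Lemma sigma_l_refine eps j N : 0 < eps -> (0 < j)%nat ->
  sigma_l p y0 eps N <= sigma_l p y0 (eps / INR j) (j * N).
Proof.
  intros He Hj; assert (Hjr : 0 < INR j) by (apply lt_0_INR; exact Hj).
  set (h := eps / INR j); assert (Hh : 0 < h) by (apply Rdiv_lt_0_compat; auto).
  assert (Heps : eps = INR j * h) by (unfold h; field; lra); clearbody h; subst eps.
  induction N as [| N IH]; [rewrite Nat.mul_0_r; simpl; lra |].
  rewrite Nat.mul_succ_r; cbn [sigma_l].
  pose proof (sigma_l_block_ge h (j * N) j Hh) as Hblock.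
  replace (INR j * h * INR (S N)) with (h * INR (j * N + j))
    by (rewrite plus_INR, mult_INR, S_INR; ring).
  lra.
Qed.

Lemma is_last_t_exists h b n : 0 < h -> 0 <= b -> (0 < n)%nat ->
  b <= sigma_l p y0 h n -> exists m, is_last_t p y0 h b m /\ (m < n)%nat.
Proof.
  intros Hh Hb Hn Hbn.
  destruct (nat_bounded_has_greatest (fun M => sigma_t p y0 h M <= b) n)
    as [m [Hm Hgreatest]].
  - exact Hb.
  - intros M HM; exact (sigma_t_le_before_sigma_l h b n M Hh Hn Hbn HM).
  - exists m; split; [split; assumption |].
    exact (sigma_t_le_before_sigma_l h b n m Hh Hn Hbn Hm).
Qed.

Hypothesis p_convex : convex_from y0 p.

Lemma convex_below_chord a e x : y0 <= a -> 0 < e -> a <= x <= a + e ->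
  e * p x <= e * p a + (x - a) * (p (a + e) - p a).
Proof.
  intros Ha He Hx.
  pose proof (p_convex a x (a + e) Ha ltac:(lra) ltac:(lra) ltac:(lra)); nra.
Qed.

(* The right-hand side is e times the integral, over [a, a + k h], of the chord
   of p over [a, a + e]. *)
Lemma sigma_t_block_le_chord h e n k : 0 < h -> 0 < e -> INR k * h <= e ->
  let a := y0 + h * INR n in
  e * (sigma_t p y0 h (n + k) - sigma_t p y0 h n)
  <= INR k * h * (e * p a + INR k * h / 2 * (p (a + e) - p a)).
Proof.
  intros Hh He Hk a.
  assert (Ha : y0 <= a) by apply grid_point_ge, Hh.
  induction k as [| k IH]; [rewrite Nat.add_0_r; simpl; lra |].
  rewrite S_INR in Hk |- *; pose proof (pos_INR k).
  rewrite Nat.add_succ_r; cbn [sigma_t].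
  replace (y0 + h * INR (S (n + k))) with (a + (INR k + 1) * h)
    by (unfold a; rewrite S_INR, plus_INR; ring).
  replace (y0 + h * INR (n + k)) with (a + INR k * h)
    by (unfold a; rewrite plus_INR; ring).
  pose proof (convex_below_chord a e (a + (INR k + 1) * h) Ha He ltac:(nra)) as C1.
  pose proof (convex_below_chord a e (a + INR k * h) Ha He ltac:(nra)) as C2.
  specialize (IH ltac:(lra)).
  set (D := p (a + e) - p a) in *.
  replace (a + (INR k + 1) * h - a) with ((INR k + 1) * h) in C1 by ring.
  replace (a + INR k * h - a) with (INR k * h) in C2 by ring.
  assert (Hstep : e * (h / 2 * (p (a + (INR k + 1) * h) + p (a + INR k * h)))
                  <= h / 2 * (2 * e * p a + (2 * INR k + 1) * h * D)).
  { replace (e * (h / 2 * (p (a + (INR k + 1) * h) + p (a + INR k * h))))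
      with (h / 2 * (e * p (a + (INR k + 1) * h) + e * p (a + INR k * h))) by ring.
    apply Rmult_le_compat_l; lra. }
  nra.
Qed.

Lemma sigma_t_refine eps j m : 0 < eps -> (0 < j)%nat ->
  sigma_t p y0 (eps / INR j) (j * m) <= sigma_t p y0 eps m.
Proof.
  intros He Hj; assert (Hjr : 0 < INR j) by (apply lt_0_INR; exact Hj).
  set (h := eps / INR j); assert (Hh : 0 < h) by (apply Rdiv_lt_0_compat; auto).
  assert (Heps : eps = INR j * h) by (unfold h; field; lra); clearbody h.
  induction m as [| m IH]; [rewrite Nat.mul_0_r; simpl; lra |].
  rewrite Nat.mul_succ_r; cbn [sigma_t].
  pose proof (sigma_t_block_le_chord h eps (j * m) j Hh He (Req_le _ _ (eq_sym Heps)))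
    as Hcell; simpl in Hcell.
  replace (h * INR (j * m)) with (eps * INR m) in Hcell
    by (rewrite mult_INR, Heps; ring).
  replace (y0 + eps * INR (S m)) with (y0 + eps * INR m + eps)
    by (rewrite S_INR; ring).
  rewrite <- Heps in Hcell.
  apply Rmult_le_reg_l with eps; [exact He |].
  nra.
Qed.

End RiemannSums.

Lemma is_first_l_exists p y0 h b N :
  (0 < N)%nat -> b <= sigma_l p y0 h N -> exists n, is_first_l p y0 h b n.
Proof.
  intros HN HbN.
  destruct (nat_has_least (fun n => (0 < n)%nat /\ b <= sigma_l p y0 h n))
    as [n [[Hn Hbn] Hleast]]; [exists N; split; assumption |].
  exists n; repeat split; try assumption.
  intros M HM HbM; apply Hleast; split; assumption.
Qed.

Theorem lemma2 (y0 b eps : R) (f f1 p p1 p2 : R -> R) :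
  0 < b -> 0 < eps ->
  (forall y, y0 <= y -> f y <> 0 /\ p y = 1 / f y) ->
  (forall y, y0 <= y -> has_deriv_ge y0 f y (f1 y)) ->
  (forall y, y0 <= y -> has_deriv_ge y0 p y (p1 y)) ->
  (forall y, y0 <= y -> has_deriv_ge y0 p1 y (p2 y)) ->
  0 < f y0 ->
  (forall y, y0 <= y -> 0 < f1 y) ->
  (forall y, y0 <= y -> 0 < p2 y) ->
  Rbar_lt (Finite b) (Lim (fun x => RInt p y0 x) p_infty) ->
  (exists N : nat, (0 < N)%nat /\ b <= sigma_l p y0 (eps / INR 1) N) ->
  forall j : nat, (0 < j)%nat ->
  exists n2 n3 m3 : nat,
    is_first_l p y0 (eps / INR j) b n2 /\
    is_last_t p y0 (eps / INR j) b n3 /\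
    is_last_t p y0 (eps / INR 1) b m3 /\
    (n3 < n2)%nat /\
    eps / INR j * INR n3 >= eps / INR 1 * INR m3.
Proof.
  intros Hb He Hfp Hf Hp Hp1 Hf0 Hf1 Hp2 _ [N1 [HN1 HbN1]] j Hj.
  replace (eps / INR 1) with eps in * by (simpl; field).
  assert (Hjr : 0 < INR j) by (apply lt_0_INR; exact Hj).
  assert (Hh : 0 < eps / INR j) by (apply Rdiv_lt_0_compat; assumption).
  destruct (inv_increasing_decreasing y0 f p (fun y Hy => proj2 (Hfp y Hy))
    (has_deriv_ge_pos_increasing y0 f f1 Hf Hf1) Hf0) as [Hpos Hdecr].
  pose proof (has_deriv_ge_increasing_convex y0 p p1 Hp
    (has_deriv_ge_pos_increasing y0 p1 p2 Hp1 Hp2)) as Hconv.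
  destruct (is_first_l_exists p y0 (eps / INR j) b (j * N1)) as [n2 Hn2].
  { lia. }
  { pose proof (sigma_l_refine p y0 Hdecr eps j N1 He Hj); lra. }
  destruct Hn2 as [Hn2pos [Hbn2 Hleast]].
  destruct (is_last_t_exists p y0 Hpos Hdecr (eps / INR j) b n2 Hh ltac:(lra)
    Hn2pos Hbn2) as [n3 [[Hn3 Hgreatest] Hn3n2]].
  destruct (is_last_t_exists p y0 Hpos Hdecr eps b N1 He ltac:(lra) HN1 HbN1)
    as [m3 [Hm3 _]].
  assert (Hjm3 : (j * m3 <= n3)%nat).
  { apply Hgreatest.
    pose proof (sigma_t_refine p y0 Hconv eps j m3 He Hj); destruct Hm3; lra. }
  exists n2, n3, m3; split; [| split; [| split; [| split]]].
  - split; [exact Hn2pos | split; assumption].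
  - split; assumption.
  - exact Hm3.
  - exact Hn3n2.
  - apply le_INR in Hjm3; rewrite mult_INR in Hjm3.
    replace (eps * INR m3) with (eps / INR j * (INR j * INR m3)) by (field; lra).
    apply Rle_ge, Rmult_le_compat_l; lra.
Qed.
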